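(* Let $D^*$ be an absolutely continuous real random variable with cumulative distribution function $F(q)=\Pr\{D^*\le q\}$ and probability density function $f(q)=dF(q)/dq$, and assume $F$ is strictly increasing and continuous. Let $c>0$, $P>0$ and $q_0\ge 0$, and consider the one-round problem $$\min_{q_1}\; c(q_1-q_0)+P\bigl(1-F(q_1)\bigr)\qquad\text{subject to } q_0\le q_1 .$$ If there exist $\tilde q> q_0$ and $\hat\epsilon\ge 0$ such that $$\frac{c}{P}\le \frac{F(\tilde q)-F(q_0)}{\tilde q-q_0},\qquad \hat\epsilon\le 1-F(q_0),\qquad P=\frac{c}{f\bigl(F^{-1}(1-\hat\epsilon)\bigr)},$$ then there exists an $\epsilon\le 1-F(q_0)$ satisfying $P=c/f\bigl(F^{-1}(1-\epsilon)\bigr)$, and an optimal solution of the problem above is $q_1^*:=F^{-1}(1-\epsilon)$. Otherwise, an optimal solution is $q_1^*:=q_0$.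
   Context: $D^*$ models the (unknown) minimum amount of training data needed to reach a target performance; $c$ is the per-sample collection cost, $P$ the penalty for failing to reach the target, and $q_0$ the initial data set size. $F^{-1}$ denotes the quantile function $F^{-1}(p)=\inf\{q : F(q)\ge p\}$. *)

From HB Require Import structures.
From mathcomp Require Import all_boot all_order all_algebra.
From mathcomp Require Import all_classical all_reals all_analysis.
Set Implicit Arguments. Unset Strict Implicit. Unset Printing Implicit Defensive.
Import Order.TTheory GRing.Theory Num.Theory.
Local Open Scope classical_set_scope.
Local Open Scope ring_scope.

Definition quantile (R : realType) (F : R -> R) (p : R) : R :=
  inf [set q | p <= F q].

(* F^{-1}(p) is a genuine real number: the set {q | F q >= p} is nonempty
   and bounded below (otherwise the infimum would be +oo or -oo). *)
Definition quantile_defined (R : realType) (F : R -> R) (p : R) : Prop :=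
  [set q | p <= F q] !=set0 /\ has_lbound [set q | p <= F q].

Definition objective (R : realType) (F : R -> R) (c P q0 q1 : R) : R :=
  c * (q1 - q0) + P * (1 - F q1).

Definition is_optimal (R : realType) (F : R -> R) (c P q0 q1 : R) : Prop :=
  q0 <= q1 /\ forall q, q0 <= q -> objective F c P q0 q1 <= objective F c P q0 q.

Definition round_condition (R : realType) (F f : R -> R) (c P q0 : R) : Prop :=
  exists qt eh : R,
    q0 < qt /\ 0 <= eh /\
    c / P <= (F qt - F q0) / (qt - q0) /\
    eh <= 1 - F q0 /\
    quantile_defined F (1 - eh) /\
    P = c / f (quantile F (1 - eh)).

From HB Require Import structures.
From mathcomp Require Import all_boot all_order all_algebra.
From mathcomp Require Import all_classical all_reals all_analysis.
From mathcomp Require Import ring lra.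
Set Implicit Arguments. Unset Strict Implicit. Unset Printing Implicit Defensive.
Import Order.TTheory GRing.Theory Num.Theory numFieldNormedType.Exports.
Local Open Scope classical_set_scope.
Local Open Scope ring_scope.

(* Minimising the objective over [q1 >= q0] amounts to maximising the gain
   [P F(q1) - c q1].  Since [0 <= F <= 1], the gain falls below its value at
   [q0] beyond [q0 + P/c], so by the extreme value theorem it attains a
   maximum on the ray [q0, +oo).  The slope condition says the gain at some
   [qt > q0] is at least the gain at [q0]; then a maximiser [y] can be taken
   with [y > q0], so the derivative [P f(y) - c] vanishes and
   [y = F^{-1}(F y)] with [eps = 1 - F y] is optimal.  Conversely, any
   [q > q0] with a larger gain than [q0] witnesses the slope condition, so
   when the condition fails [q0] is optimal. *)

Lemma fine_cdf_itv d (T : measurableType d) (R : realType)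
    (Pr : probability T R) (X : {RV Pr >-> R}) (q : R) :
  0 <= fine (cdf X q) <= 1.
Proof.
have := cdf_ge0 X q; have := cdf_le1 X q.
by case: (cdf X q) => [r| |] //=; rewrite !lee_fin => -> ->.
Qed.

Lemma continuous_argmax_on_ray (R : realType) (g : R -> R) (a b M : R) :
  continuous g -> a < b -> g a <= g b -> (forall t, M < t -> g t < g a) ->
  exists2 y, a < y & forall t, a <= t -> g t <= g y.
Proof.
move=> cg ab gab gM.
have bM : b <= M by rewrite leNgt; apply/negP => /gM; rewrite ltNge gab.
have aM : a <= M by rewrite ltW // (lt_le_trans ab bM).
have [x xaM xmax] := EVT_max aM (continuous_subspaceT cg).
have gax : g a <= g x by apply: xmax; rewrite in_itv /= lexx aM.
have max_on_ray z : g a <= g z -> (forall t, t \in `[a, M] -> g t <= g z) ->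
    forall t, a <= t -> g t <= g z.
  move=> gaz zmax t ta; have [tM|Mt] := leP t M.
    by apply: zmax; rewrite in_itv /= ta tM.
  exact/ltW/(lt_le_trans (gM t Mt)).
have [gxb|gbx] := leP (g x) (g b).
  exists b => //; apply: max_on_ray (le_trans gax gxb) _.
  by move=> t /xmax /le_trans; apply.
exists x; last exact: max_on_ray.
move: xaM; rewrite in_itv /= lt_neqAle => /andP[-> _]; rewrite andbT.
by apply: contraTneq gbx => <-; rewrite -leNgt.
Qed.

Section quantile_increasing.
Variables (R : realType) (F : R -> R).
Hypothesis Finc : {homo F : x z / x < z}.

Lemma lbound_quantile_set y : lbound [set q | F y <= F q] y.
Proof. by move=> z /=; apply: contraTT; rewrite -!ltNge => /Finc. Qed.

Lemma quantile_defined_image y : quantile_defined F (F y).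
Proof. by split; [exists y => /= | exists y; exact: lbound_quantile_set]. Qed.

Lemma quantileK : cancel F (quantile F).
Proof.
move=> y; have [ne hlb] := quantile_defined_image y.
apply/eqP; rewrite /quantile eq_le ge_inf //=.
by apply: lb_le_inf => //; exact: lbound_quantile_set.
Qed.

End quantile_increasing.

Section one_round.
Variables (R : realType) (F f : R -> R) (c P : R).
Hypotheses (F01 : forall q, 0 <= F q <= 1) (c_gt0 : 0 < c) (P_gt0 : 0 < P).

Definition gain (t : R) : R := P * F t - c * t.

Lemma objectiveE q0 q1 : objective F c P q0 q1 = P - c * q0 - gain q1.
Proof. by rewrite /objective /gain; ring. Qed.

Lemma is_optimal_gain q0 q1 :
  q0 <= q1 -> (forall q, q0 <= q -> gain q <= gain q1) ->
  is_optimal F c P q0 q1.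
Proof. by move=> q01 q1max; split=> // q /q1max; rewrite !objectiveE; lra. Qed.

Lemma slope_gainP q0 qt : q0 < qt ->
  c / P <= (F qt - F q0) / (qt - q0) <-> gain q0 <= gain qt.
Proof.
move=> q0qt; rewrite ler_pdivlMr ?subr_gt0 // mulrAC ler_pdivrMr // /gain.
by split; lra.
Qed.

Lemma gain_lt_far q0 t : q0 + P / c < t -> gain t < gain q0.
Proof.
rewrite -ltrBrDl ltr_pdivrMr // /gain => Pc.
have /andP[F0 _] := F01 q0; have /andP[_ F1] := F01 t.
have : P * F t <= P by rewrite -{2}(mulr1 P) ler_pM2l.
have : 0 <= P * F q0 by rewrite mulr_ge0 // ltW.
lra.
Qed.

Hypothesis dF : forall q : R, is_derive q (1 : R) F (f q).

Lemma is_derive_gain (t : R) : is_derive t (1 : R) gain (P * f t - c).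
Proof.
have := is_deriveB (is_deriveZ P (dF t)) (is_deriveZ c (@is_derive_id _ R^o t 1)).
by rewrite /GRing.scale /= mulr1.
Qed.

Lemma continuous_gain : continuous gain.
Proof.
move=> t; have [dg _] := is_derive_gain t.
exact/differentiable_continuous/derivable1_diffP.
Qed.

Lemma argmax_gain_stationary q0 y :
  q0 < y -> (forall t, q0 <= t -> gain t <= gain y) -> f y = c / P.
Proof.
move=> q0y ymax.
have [_ Dgain0] : is_derive y (1 : R) gain 0.
  apply: (@derive1_at_max _ _ q0 (y + 1)); first lra.
  - by move=> t _; have [] := is_derive_gain t.
  - by rewrite in_itv /= q0y ltrDl ltr01.
  - by move=> t; rewrite in_itv /= => /andP[/ltW q0t _]; exact: ymax.
have [_ Dgain] := is_derive_gain y.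
move: Dgain0; rewrite Dgain => /eqP; rewrite subr_eq0 => /eqP <-.
by rewrite [P * _]mulrC mulfK ?gt_eqF.
Qed.

Lemma exists_optimal_quantile q0 qt :
  {homo F : x z / x < z} -> q0 < qt -> gain q0 <= gain qt ->
  exists2 y, q0 < y & [/\ quantile_defined F (F y),
    P = c / f (quantile F (F y)) & is_optimal F c P q0 (quantile F (F y))].
Proof.
move=> Finc q0qt gqt.
have [y q0y ymax] := continuous_argmax_on_ray continuous_gain q0qt gqt
  (@gain_lt_far q0).
exists y => //; rewrite quantileK //; split.
- exact: quantile_defined_image.
- by rewrite (argmax_gain_stationary q0y ymax) invf_div mulrCA divff ?mulr1 ?gt_eqF.
- exact: is_optimal_gain (ltW q0y) ymax.
Qed.

End one_round.

Theorem theorem1 (R : realType) (d : measure_display) (T : measurableType d)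
    (Pr : probability T R) (D : {RV Pr >-> R}) (F f : R -> R) (c P q0 : R) :
  (forall q, F q = fine (cdf D q)) ->
  distribution Pr D `<< (@lebesgue_measure R) ->
  (forall q : R, is_derive q (1 : R) F (f q)) ->
  (forall x y, x < y -> F x < F y) ->
  continuous F ->
  0 < c -> 0 < P -> 0 <= q0 ->
  (round_condition F f c P q0 ->
     exists eps : R, [/\ eps <= 1 - F q0,
       quantile_defined F (1 - eps),
       P = c / f (quantile F (1 - eps)) &
       is_optimal F c P q0 (quantile F (1 - eps))]) /\
  (~ round_condition F f c P q0 -> is_optimal F c P q0 q0).
Proof.
move=> FE _ dF Finc _ c_gt0 P_gt0 _.
have F01 q : 0 <= F q <= 1 by rewrite FE fine_cdf_itv.
split.
  case=> qt [_ [q0qt [_ [/(slope_gainP F c P_gt0 q0qt) gqt _]]]].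
  have [y q0y [qd Pe opt]] := exists_optimal_quantile F01 c_gt0 P_gt0 dF Finc q0qt gqt.
  exists (1 - F y); rewrite subKr; split => //.
  by have := Finc _ _ q0y; lra.
move=> no_round; apply: is_optimal_gain => // q q0q.
rewrite leNgt; apply/negP => gq; apply: no_round.
have q0q' : q0 < q.
  by rewrite lt_neqAle q0q andbT; apply: contraTneq gq => ->; rewrite ltxx.
have [y q0y [qd Pe _]] := exists_optimal_quantile F01 c_gt0 P_gt0 dF Finc q0q' (ltW gq).
have /andP[_ Fy1] := F01 y.
exists q, (1 - F y); rewrite subKr; split=> //; split; first by rewrite subr_ge0.
split; first exact/(slope_gainP F c P_gt0 q0q')/ltW.
split; first by have := Finc _ _ q0y; lra.
by [].
Qed.
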